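(* Let $B$ be a finite skew brace with $(B,+)$ abelian such that $\Lambda(B)$ has exactly one vertex. Then $B$ is isomorphic to one of: (1) $\mathbb{Z}/4\mathbb{Z}$ with its usual addition and $x\circ y=x+y+2xy$; (2) $\mathbb{Z}/2\mathbb{Z}\times\mathbb{Z}/2\mathbb{Z}$ with componentwise addition and $(x_1,y_1)\circ(x_2,y_2)=(x_1+x_2+y_1y_2,\,y_1+y_2)$; (3) $\mathbb{Z}/2\mathbb{Z}\times\mathbb{Z}/4\mathbb{Z}$ with componentwise addition and $(x_1,y_1)\circ(x_2,y_2)=\big(x_1+x_2+\varepsilon(y_1)y_2,\,y_1+y_2+2y_1y_2\big)$, where $\varepsilon(y_1)=0$ if $y_1\in\{0,1\}$ and $\varepsilon(y_1)=1$ if $y_1\in\{2,3\}$ (i.e. $\varepsilon(y_1)=\sum_{i=1}^{y_1-1}i \bmod 2$ for the representative $y_1\in\{0,1,2,3\}$), and $\varepsilon(y_1)y_2$ is computed in $\mathbb{Z}/2\mathbb{Z}$.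
   Context: A skew brace is a triple $(A,+,\circ)$ where $(A,+)$ and $(A,\circ)$ are groups with $a\circ(b+c)=a\circ b-a+a\circ c$. $\lambda_a(b)=-a+a\circ b$ defines an action of $(A,\circ)$ on $(A,+)$ by automorphisms. $\Lambda(A)$ is the graph whose vertices are the $\lambda$-orbits of size $>1$, two distinct vertices $L_1,L_2$ adjacent iff $\gcd(|L_1|,|L_2|)\ne1$. *)

From HB Require Import structures.
From mathcomp Require Import all_boot all_algebra.
Set Implicit Arguments. Unset Strict Implicit. Unset Printing Implicit Defensive.
Import GRing.Theory.

Record skew_brace (T : finType) := SkewBrace {
  sb_add : T -> T -> T;
  sb_zero : T;
  sb_opp : T -> T;
  sb_circ : T -> T -> T;
  sb_one : T;
  sb_cinv : T -> T;
  sb_addA : forall a b c, sb_add a (sb_add b c) = sb_add (sb_add a b) c;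
  sb_add0r : forall a, sb_add sb_zero a = a;
  sb_addr0 : forall a, sb_add a sb_zero = a;
  sb_addNr : forall a, sb_add (sb_opp a) a = sb_zero;
  sb_addrN : forall a, sb_add a (sb_opp a) = sb_zero;
  sb_circA : forall a b c, sb_circ a (sb_circ b c) = sb_circ (sb_circ a b) c;
  sb_circ1r : forall a, sb_circ sb_one a = a;
  sb_circr1 : forall a, sb_circ a sb_one = a;
  sb_circVr : forall a, sb_circ (sb_cinv a) a = sb_one;
  sb_circrV : forall a, sb_circ a (sb_cinv a) = sb_one;
  sb_compat : forall a b c,
    sb_circ a (sb_add b c) = sb_add (sb_add (sb_circ a b) (sb_opp a)) (sb_circ a c)
}.

Definition additively_abelian (T : finType) (B : skew_brace T) :=
  forall a b, sb_add B a b = sb_add B b a.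

Definition sb_lambda (T : finType) (B : skew_brace T) (a b : T) : T :=
  sb_add B (sb_opp B a) (sb_circ B a b).

Definition lambda_orbit (T : finType) (B : skew_brace T) (b : T) : {set T} :=
  [set sb_lambda B a b | a in T].

Definition Lambda_vertices (T : finType) (B : skew_brace T) : {set {set T}} :=
  [set lambda_orbit B b | b in T & 1 < #|lambda_orbit B b|].

Definition brace_isomorphic (T : finType) (B : skew_brace T) (T' : Type)
    (addT circT : T' -> T' -> T') : Prop :=
  exists f : T -> T', bijective f /\
    (forall x y, f (sb_add B x y) = addT (f x) (f y)) /\
    (forall x y, f (sb_circ B x y) = circT (f x) (f y)).

Local Open Scope ring_scope.

Definition add1 (x y : 'Z_4) : 'Z_4 := x + y.
Definition circ1 (x y : 'Z_4) : 'Z_4 := x + y + 2%:R * x * y.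

Definition add2 (p q : 'Z_2 * 'Z_2) : 'Z_2 * 'Z_2 := (p.1 + q.1, p.2 + q.2).
Definition circ2 (p q : 'Z_2 * 'Z_2) : 'Z_2 * 'Z_2 :=
  (p.1 + q.1 + p.2 * q.2, p.2 + q.2).

Definition eps3 (y : 'Z_4) : 'Z_2 := (1 < (y : nat))%N%:R.
Definition red42 (y : 'Z_4) : 'Z_2 := (y : nat)%:R.
Definition add3 (p q : 'Z_2 * 'Z_4) : 'Z_2 * 'Z_4 := (p.1 + q.1, p.2 + q.2).
Definition circ3 (p q : 'Z_2 * 'Z_4) : 'Z_2 * 'Z_4 :=
  (p.1 + q.1 + eps3 p.2 * red42 q.2, p.2 + q.2 + 2%:R * p.2 * q.2).

From HB Require Import structures.
From mathcomp Require Import all_boot all_algebra zify.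
Set Implicit Arguments. Unset Strict Implicit. Unset Printing Implicit Defensive.
Import GRing.Theory.
Local Open Scope ring_scope.

(* Write F for the set of common fixed points of the maps lambda_a.  It is an
   additive subgroup, and its complement is a union of lambda-orbits of size
   > 1; if Lambda(B) has a single vertex, this complement is one orbit O of
   some x0.  Since x0 + F lies in O, the orbit-stabilizer count
   |B| = |O| |Stab x0| = |F| + |O| forces |Stab x0| = 2 and O = x0 + F: F has
   index two (record coset_data).  Then delta a = lambda_a(x0) - x0 defines a
   homomorphism from (B, o) onto F with kernel of order two, lambda_a fixes F
   and translates the other coset by delta a, i.e.
       a o b = a + b + [b not in F] delta a,
   and F is elementary abelian.  If delta vanishes on F, then F = {0, e} with
   e = delta x0 and B is model (1) or (2) according as 2 x0 = e or 2 x0 = 0.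
   Otherwise delta f1 = e != 0 for some f1 in F, F = {0, e, 2x, e + 2x} for a
   suitable representative x with delta x = 2x, and B is model (3).  Each model
   is recognised through the explicit embedding (i, j) |-> i e + j x
   (lemma brace_iso_of), using that the models also have the shape
   p o q = p + q + [q odd] twist p. *)

Definition twist1 (p : 'Z_4) : 'Z_4 := 2%:R * p.
Definition twist2 (p : 'Z_2 * 'Z_2) : 'Z_2 * 'Z_2 := (p.2, 0).
Definition twist3 (p : 'Z_2 * 'Z_4) : 'Z_2 * 'Z_4 := (eps3 p.2, 2%:R * p.2).

Lemma twist3_val p : nat_of_ord (twist3 p).1 = (1 < p.2)%N /\
  nat_of_ord (twist3 p).2 = (if odd p.2 then 2 else 0)%N.
Proof. by case: p => i [[|[|[|[|?]]]] ?]. Qed.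

Lemma circ1_twist p q :
  circ1 p q = if odd q then add1 (add1 p q) (twist1 p) else add1 p q.
Proof. by apply/eqP; case: p q => [[|[|[|[|?]]]] ?] [[|[|[|[|?]]]] ?]. Qed.

Lemma circ2_twist p q :
  circ2 p q = if odd q.2 then add2 (add2 p q) (twist2 p) else add2 p q.
Proof.
by apply/eqP; case: p q => [[[|[|?]] ?] [[|[|?]] ?]] [[[|[|?]] ?] [[|[|?]] ?]].
Qed.

Lemma circ3_twist p q :
  circ3 p q = if odd q.2 then add3 (add3 p q) (twist3 p) else add3 p q.
Proof.
by apply/eqP; case: p q => [[[|[|?]] ?] [[|[|[|[|?]]]] ?]]
                          [[[|[|?]] ?] [[|[|[|[|?]]]] ?]].
Qed.

Lemma mulrn_Zp (V : zmodType) (a : V) n (i j : 'I_n.+1) :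
  a *+ n.+1 = 0 -> a *+ (i + j)%R = a *+ i + a *+ j.
Proof.
move=> an; rewrite -mulrnDr [in RHS](divn_eq (i + j) n.+1) mulrnDr mulnC mulrnA an.
by rewrite mul0rn add0r.
Qed.

Lemma additive_inj (V W : zmodType) (psi : V -> W) :
  (forall p q, psi (p + q) = psi p + psi q) -> (forall p, psi p = 0 -> p = 0) ->
  injective psi.
Proof.
move=> psiD psi_ker p q psi_pq; apply/eqP; rewrite -subr_eq0; apply/eqP/psi_ker.
by apply: (addIr (psi q)); rewrite -psiD subrK add0r.
Qed.

Section SkewBrace.
Variables (T : finType) (B : skew_brace T).
Hypothesis addC : additively_abelian B.

Definition BT : Type := T.
HB.instance Definition _ := Finite.on BT.
HB.instance Definition _ :=
  GRing.isZmodule.Build BT (@sb_addA _ B) addC (@sb_add0r _ B) (@sb_addNr _ B).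

Definition circ (a b : BT) : BT := sb_circ B a b.
Definition lam (a b : BT) : BT := sb_lambda B a b.

Lemma lamE a b : lam a b = - a + circ a b. Proof. by []. Qed.

Lemma circDr a b d : circ a (b + d) = circ a b - a + circ a d.
Proof. exact: (sb_compat B). Qed.

Lemma circr0 a : circ a 0 = a.
Proof.
have := circDr a 0 0; rewrite addr0 => /(congr1 (fun z => z - circ a 0)).
by rewrite addrK subrr => /eqP; rewrite eq_sym subr_eq0 => /eqP.
Qed.

Lemma one0 : sb_one B = 0 :> BT.
Proof. by rewrite -[RHS](sb_circ1r B) -/(circ _ _) circr0. Qed.

Lemma circ0r a : circ 0 a = a.
Proof. by rewrite -one0; exact: (sb_circ1r B). Qed.

Lemma circE a b : circ a b = a + lam a b.
Proof. by rewrite lamE addNKr. Qed.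

Lemma circ_inj a : injective (circ a).
Proof.
move=> b d /(congr1 (circ (sb_cinv B a))).
by rewrite /circ !(sb_circA B) (sb_circVr B) !(sb_circ1r B).
Qed.

Lemma lamD a b d : lam a (b + d) = lam a b + lam a d.
Proof. by rewrite !lamE circDr !addrA. Qed.

Lemma lam0 a : lam a 0 = 0.
Proof. by rewrite lamE circr0 addNr. Qed.

Lemma lamN a b : lam a (- b) = - lam a b.
Proof. by apply/eqP; rewrite -addr_eq0 -lamD addNr lam0. Qed.

Lemma lam0l b : lam 0 b = b.
Proof. by rewrite lamE circ0r oppr0 add0r. Qed.

Lemma lamM a b y : lam (circ a b) y = lam a (lam b y).
Proof.
rewrite [lam b y]lamE lamD lamN !lamE /circ (sb_circA B).
by rewrite opprD opprK addrACA subrr add0r.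
Qed.

Lemma lamK a y : lam (sb_cinv B a) (lam a y) = y.
Proof. by rewrite -lamM /circ (sb_circVr B) one0 lam0l. Qed.

Definition fixed : {set BT} := [set y | [forall a, lam a y == y]].

Lemma fixedP y : reflect (forall a, lam a y = y) (y \in fixed).
Proof.
rewrite inE; apply: (iffP forallP) => [h a | h a]; first exact/eqP/h.
by rewrite h.
Qed.

Lemma fixed0 : 0 \in fixed.
Proof. by apply/fixedP => a; rewrite lam0. Qed.

Lemma fixedD (u v : BT) : u \in fixed -> v \in fixed -> u + v \in fixed.
Proof. by move=> /fixedP hu /fixedP hv; apply/fixedP => a; rewrite lamD hu hv. Qed.

Lemma fixedN (u : BT) : u \in fixed -> - u \in fixed.
Proof. by move=> /fixedP hu; apply/fixedP => a; rewrite lamN hu. Qed.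

Lemma fixedDl (f y : BT) : f \in fixed -> (f + y \in fixed) = (y \in fixed).
Proof.
move=> fF; apply/idP/idP => [h | /(fixedD fF) //].
by rewrite -(addKr f y) fixedD ?fixedN.
Qed.

Lemma fixed_lam a y : (lam a y \in fixed) = (y \in fixed).
Proof.
apply/idP/idP => [/fixedP h | /fixedP h]; last by rewrite h; apply/fixedP.
by rewrite -(lamK a y) h; apply/fixedP.
Qed.

Definition orbit (b : BT) : {set BT} := [set y : BT | y \in lambda_orbit B b].

Lemma lambda_orbitP b y : reflect (exists a, y = lam a b) (y \in lambda_orbit B b).
Proof. by apply: (iffP imsetP) => [[a _ ->] | [a ->]]; exists a. Qed.

Lemma orbitP b y : reflect (exists a, y = lam a b) (y \in orbit b).
Proof. by rewrite inE; apply: lambda_orbitP. Qed.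

Lemma orbit_self b : b \in orbit b.
Proof. by apply/orbitP; exists 0; rewrite lam0l. Qed.

Lemma orbit_trans b y z : y \in orbit b -> z \in orbit y -> z \in orbit b.
Proof.
by move=> /orbitP [d ->] /orbitP [a ->]; apply/orbitP; exists (circ a d); rewrite lamM.
Qed.

Lemma orbit_sym b y : y \in orbit b -> b \in orbit y.
Proof. by move=> /orbitP [d ->]; apply/orbitP; exists (sb_cinv B d); rewrite lamK. Qed.

Lemma orbit_eq b y : y \in orbit b -> lambda_orbit B y = lambda_orbit B b.
Proof.
move=> yb; apply/setP => z.
have := @orbit_trans _ _ z yb; have := @orbit_trans _ _ z (orbit_sym yb).
by rewrite !inE => from_b from_y; apply/idP/idP.
Qed.

Lemma fixed_orbit y : (y \in fixed) = (#|lambda_orbit B y| <= 1)%N.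
Proof.
apply/fixedP/card_le1_eqP => [h u v | h a].
  by move=> /lambda_orbitP [a ->] /lambda_orbitP [d ->]; rewrite !h.
by apply/esym/h; apply/lambda_orbitP; [exists a | exists 0; rewrite lam0l].
Qed.

Lemma single_vertex_orbit :
  #|Lambda_vertices B| = 1%N -> exists x0, orbit x0 = ~: fixed.
Proof.
move=> /eqP /cards1P [V hV].
have : V \in Lambda_vertices B by rewrite hV set11.
case/imsetP => x0; rewrite inE => /andP [_ big_x0] eV; exists x0.
apply/setP => y; rewrite in_setC fixed_orbit -ltnNge.
apply/idP/idP => [yx0 | big_y]; first by rewrite (orbit_eq yx0).
have : lambda_orbit B y \in Lambda_vertices B by apply/imsetP; exists y; rewrite // inE big_y.
rewrite hV eV inE => /eqP orbit_y.
by rewrite inE -orbit_y; apply/lambda_orbitP; exists 0; rewrite lam0l.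
Qed.

Definition stab (x0 : BT) : {set BT} := [set a | lam a x0 == x0].

(* The fibre of a |-> lambda_a(x0) over lambda_d(x0) is the coset d o stab x0. *)
Lemma fiber_card x0 d : #|[set a | lam a x0 == lam d x0]| = #|stab x0|.
Proof.
rewrite -(card_imset (stab x0) (@circ_inj d)); apply: eq_card => a.
rewrite inE; apply/eqP/imsetP => [h | [k]].
  exists (circ (sb_cinv B d) a); last by rewrite /circ (sb_circA B) (sb_circrV B) (sb_circ1r B).
  by rewrite inE lamM h lamK.
by rewrite inE => /eqP hk ->; rewrite lamM hk.
Qed.

Lemma orbit_stabilizer x0 : #|{: BT}| = (#|orbit x0| * #|stab x0|)%N.
Proof.
rewrite -[LHS]sum1_card (partition_big (lam^~ x0) (mem (orbit x0))) /=; last first.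
  by move=> a _; apply/orbitP; exists a.
rewrite -sum_nat_const; apply: eq_bigr => _ /orbitP [d ->].
by rewrite -(fiber_card x0 d) -sum1dep_card; apply: eq_bigl.
Qed.

Lemma index_two x0 : orbit x0 = ~: fixed ->
  #|stab x0| = 2 /\ orbit x0 = [set x0 + f | f in fixed].
Proof.
move=> orbit_x0.
have x0_nonfixed : x0 \notin fixed by rewrite -in_setC -orbit_x0 orbit_self.
have coset_sub : [set x0 + f | f in fixed] \subset orbit x0.
  by apply/subsetP => _ /imsetP [f fF ->]; rewrite orbit_x0 inE addrC (fixedDl _ fF).
have F_le : (#|fixed| <= #|orbit x0|)%N.
  by rewrite -(card_imset _ (addrI x0)) subset_leq_card.
have F_gt0 : (0 < #|fixed|)%N by apply/card_gt0P; exists 0; exact: fixed0.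
have O_gt0 : (0 < #|orbit x0|)%N by apply/card_gt0P; exists x0; exact: orbit_self.
have count : (#|orbit x0| * #|stab x0| = #|fixed| + #|orbit x0|)%N.
  by rewrite -orbit_stabilizer orbit_x0 cardsC.
have [stab2 F_eq] : #|stab x0| = 2 /\ #|fixed| = #|orbit x0|.
  by move: count; case: #|stab x0| => [|[|[|k]]]; nia.
split => //; apply/esym/eqP.
by rewrite eqEcard coset_sub (card_imset _ (addrI x0)) F_eq leqnn.
Qed.

Definition delta (x0 a : BT) : BT := lam a x0 - x0.

Record coset_data (x0 : BT) : Prop := CosetData {
  rep_nonfixed : x0 \notin fixed;
  coset_shift : forall y, y \notin fixed -> y - x0 \in fixed;
  delta_onto : forall f, f \in fixed -> exists a, delta x0 a = f;
  stab_card : #|stab x0| = 2;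
  card_fixed : #|{: BT}| = (#|fixed| * 2)%N }.

Lemma single_vertex_coset :
  #|Lambda_vertices B| = 1%N -> exists x0, coset_data x0.
Proof.
move=> /single_vertex_orbit [x0 orbit_x0]; exists x0.
have [stab2 coset_x0] := index_two orbit_x0.
have in_coset y : y \notin fixed -> exists2 f, f \in fixed & y = x0 + f.
  by rewrite -in_setC -orbit_x0 coset_x0 => /imsetP.
split => //.
- by rewrite -in_setC -orbit_x0 orbit_self.
- by move=> y /in_coset [f fF ->]; rewrite addrC addKr.
- move=> f fF; have : x0 + f \in orbit x0 by rewrite coset_x0 imset_f.
  by case/orbitP => a xa; exists a; rewrite /delta -xa addrC addKr.
- by rewrite (orbit_stabilizer x0) stab2 coset_x0 (card_imset _ (addrI x0)).
Qed.

Section CosetData.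
Variable x0 : BT.
Hypothesis x0_coset : coset_data x0.
Local Notation F := fixed.
Local Notation δ := (delta x0).

(* lambda_a (x0) stays in the coset x0 + F. *)
Lemma delta_fixed a : δ a \in F.
Proof.
by apply: (coset_shift x0_coset); rewrite fixed_lam; exact: (rep_nonfixed x0_coset).
Qed.

(* Every double lies in the index-two subgroup F. *)
Lemma double_fixed (y : BT) : y + y \in F.
Proof.
have x0_x0 : x0 + x0 \in F.
  apply: contraT => /(coset_shift x0_coset); rewrite addrK.
  by rewrite (negbTE (rep_nonfixed x0_coset)).
case: (boolP (y \in F)) => [yF | /(coset_shift x0_coset) yx0F]; first exact: fixedD.
by rewrite -(subrK x0 y) addrACA; apply/fixedD/x0_x0/fixedD.
Qed.

Lemma lam_nonfixed (a y : BT) : y \notin F -> lam a y = y + δ a.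
Proof.
move=> /(coset_shift x0_coset) /fixedP yx0F.
by rewrite -[in LHS](subrK x0 y) lamD yx0F /delta addrAC -addrA.
Qed.

Lemma circ_twist (a b : BT) : circ a b = a + b + (if b \in F then 0 else δ a).
Proof.
rewrite circE; case: ifP => [/fixedP -> | /negbT bF]; first by rewrite addr0.
by rewrite lam_nonfixed // addrA.
Qed.

Lemma deltaM a b : δ (circ a b) = δ a + δ b.
Proof.
have /fixedP fix_b := delta_fixed b.
rewrite /delta lamM -{1}[lam b x0](subrK x0) lamD fix_b.
by rewrite [_ + lam a x0]addrC addrAC.
Qed.

Lemma delta0 : δ 0 = 0.
Proof. by rewrite /delta lam0l subrr. Qed.

Lemma deltaD (a f : BT) : f \in F -> δ (a + f) = δ a + δ f.
Proof. by move=> fF; rewrite -deltaM circ_twist fF addr0. Qed.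

Lemma delta_nonfixed (y : BT) : y \notin F -> δ y = δ x0 + δ (y - x0).
Proof. by move/(coset_shift x0_coset)/deltaD <-; rewrite addrC subrK. Qed.

Lemma fixed_double (f : BT) : f \in F -> f + f = 0.
Proof.
case/(delta_onto x0_coset) => a <-.
have /fixedP/(_ a) := double_fixed x0; rewrite lamD.
by rewrite -[lam a x0](subrK x0) -/(δ a) addrACA -[RHS]add0r => /addIr.
Qed.

Lemma delta_delta (f : BT) : f \in F -> δ (δ f) = 0.
Proof.
move=> fF; have delta_fF := delta_fixed f; have := deltaM f x0.
rewrite circ_twist (negbTE (rep_nonfixed x0_coset)) [f + x0]addrC -addrA.
rewrite (deltaD x0 (fixedD fF delta_fF)) (deltaD f delta_fF).
by rewrite addrA [δ x0 + _]addrC -[RHS]addr0 => /addrI.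
Qed.

(* The kernel of delta is the stabilizer of x0, which has exactly two elements. *)
Lemma delta_kernel (e a : BT) : e != 0 -> δ e = 0 -> δ a = 0 -> a = 0 \/ a = e.
Proof.
move=> e_neq0 delta_e delta_a.
have kerE : stab x0 = [set b | δ b == 0] by apply/setP => b; rewrite !inE subr_eq0.
have : [set 0; e] = stab x0.
  apply/eqP; rewrite eqEcard (stab_card x0_coset) cards2 eq_sym e_neq0 andbT kerE.
  by apply/subsetP => b; rewrite !inE => /orP [] /eqP ->; rewrite ?delta0 ?delta_e.
by move/setP/(_ a); rewrite kerE !inE delta_a eqxx => /orP [] /eqP; [left | right].
Qed.

Lemma fixed_mulrn (f : BT) n : f \in F -> f *+ n \in F.
Proof. by move=> fF; elim: n => [|n IHn]; rewrite ?mulr0n ?fixed0 // mulrS fixedD. Qed.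

Lemma delta_mulrn (f : BT) n : f \in F -> δ (f *+ n) = δ f *+ n.
Proof.
move=> fF; elim: n => [|n IHn]; first by rewrite !mulr0n delta0.
by rewrite !mulrSr deltaD // IHn.
Qed.

Lemma mulrn_parity (x : BT) k : x \notin F -> (x *+ k \in F) = ~~ odd k.
Proof.
move=> xF; have xxF := fixed_mulrn k./2 (double_fixed x).
rewrite -[in LHS](odd_double_half k) mulrnDr -muln2 mulnC mulrnA mulr2n.
rewrite addrC (fixedDl _ xxF).
by case: (odd k); rewrite ?mulr1n ?mulr0n ?fixed0 ?(negbTE xF).
Qed.

Lemma card_cover (s : seq BT) : {subset F <= s} -> (#|{: BT}| <= size s * 2)%N.
Proof.
move=> Fs; rewrite (card_fixed x0_coset) leq_mul2r /=.
by apply: leq_trans (card_size s); apply/subset_leq_card/subsetP.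
Qed.

Lemma brace_iso_of (V : finType) (addV circV : V -> V -> V) (twist : V -> V)
    (odd_part : pred V) (psi : V -> BT) :
  (forall p q, circV p q = if odd_part q then addV (addV p q) (twist p) else addV p q) ->
  injective psi -> (#|{: BT}| <= #|V|)%N ->
  (forall p q, psi (addV p q) = psi p + psi q) ->
  (forall q, (psi q \in F) = ~~ odd_part q) ->
  (forall p, psi (twist p) = δ (psi p)) ->
  brace_isomorphic B addV circV.
Proof.
move=> circVE psi_inj card_V psiD psiF psi_twist.
have [phi psiK phiK] := inj_card_bij psi_inj card_V.
exists phi; split; first by exists psi.
split=> a b; apply: psi_inj; rewrite phiK; first by rewrite psiD !phiK.
rewrite -[sb_circ B a b]/(circ a b) circ_twist circVE -[b in b \in F]phiK psiF.
by case: (odd_part _); rewrite /= !psiD ?psi_twist !phiK ?addr0.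
Qed.

Lemma iso_Z4 (x : BT) : x \notin F -> x + x != 0 -> {subset F <= [:: 0; x + x]} ->
  (forall y, δ y = if y \in F then 0 else x + x) -> brace_isomorphic B add1 circ1.
Proof.
move=> xF xx_neq0 F_cover deltaE.
have x4 : x *+ 4 = 0.
  by rewrite -[4%N]/(2 * 2)%N mulrnA !mulr2n (fixed_double (double_fixed x)).
have psiD (i j : 'Z_4) : x *+ (i + j)%R = x *+ i + x *+ j := mulrn_Zp i j x4.
have psiF (j : 'Z_4) : (x *+ j \in F) = ~~ odd j := mulrn_parity j xF.
apply: (brace_iso_of circ1_twist (psi := fun j : 'Z_4 => x *+ j)) => //.
- apply: additive_inj psiD _ => j psi_j0; have := psiF j; rewrite psi_j0 fixed0.
  case: j psi_j0 => [[|[|[|[|?]]]] ?] //= psi_j0 _; first exact: val_inj.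
  by rewrite -mulr2n psi_j0 eqxx in xx_neq0.
- by apply: leq_trans (card_cover F_cover) _; rewrite card_ord.
- by move=> j; rewrite deltaE psiF; case: j => [[|[|[|[|?]]]] ?].
Qed.

Lemma pair_fixed (e x : BT) i j :
  e \in F -> x \notin F -> (e *+ i + x *+ j \in F) = ~~ odd j.
Proof. by move=> eF xF; rewrite (fixedDl _ (fixed_mulrn i eF)) mulrn_parity. Qed.

Lemma delta_pair (e x : BT) i j :
  e \in F -> δ e = 0 -> δ (e *+ i + x *+ j) = δ (x *+ j).
Proof.
move=> eF delta_e; have eiF := fixed_mulrn i eF.
by rewrite addrC (deltaD _ eiF) (delta_mulrn i eF) delta_e mul0rn addr0.
Qed.

Lemma iso_Z2Z2 (e x : BT) : e != 0 -> x \notin F -> x + x = 0 ->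
  {subset F <= [:: 0; e]} -> (forall y, δ y = if y \in F then 0 else e) ->
  brace_isomorphic B add2 circ2.
Proof.
move=> e_neq0 xF xx0 F_cover deltaE.
have eF : e \in F by have := delta_fixed x; rewrite deltaE (negbTE xF).
have e2 : e *+ 2 = 0 by rewrite mulr2n fixed_double.
have x2 : x *+ 2 = 0 by rewrite mulr2n.
pose psi (p : 'Z_2 * 'Z_2) := e *+ p.1 + x *+ p.2.
have psiD p q : psi (p + q) = psi p + psi q.
  by rewrite /psi /= (mulrn_Zp p.1 q.1 e2) (mulrn_Zp p.2 q.2 x2) addrACA.
have psiF q : (psi q \in F) = ~~ odd q.2 := pair_fixed _ _ eF xF.
apply: (brace_iso_of circ2_twist (psi := psi)) => //.
- apply: additive_inj psiD _ => -[i j] psi0; have := psiF (i, j); rewrite psi0 fixed0.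
  case: i j psi0 => [[|[|?]] ?] [[|[|?]] ?] //= psi0 _; first exact/eqP.
  by move: psi0; rewrite /psi /= mulr0n addr0 mulr1n => e0; rewrite e0 eqxx in e_neq0.
- by rewrite card_prod !card_ord; exact: card_cover F_cover.
- move=> -[i j]; rewrite /psi delta_pair ?deltaE ?eF // mulrn_parity //.
  by case: j => [[|[|?]] ?]; rewrite /= ?addr0.
Qed.

Lemma iso_Z2Z4 (e x : BT) : e != 0 -> δ e = 0 -> x \notin F ->
  δ x = x + x -> δ (x + x) = e -> {subset F <= [:: 0; e; x + x; e + (x + x)]} ->
  brace_isomorphic B add3 circ3.
Proof.
move=> e_neq0 delta_e xF delta_x delta_xx F_cover.
have eF : e \in F by rewrite -delta_xx delta_fixed.
have uF : x + x \in F := double_fixed x.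
have e2 : e *+ 2 = 0 by rewrite mulr2n fixed_double.
have x4 : x *+ 4 = 0.
  by rewrite -[4%N]/(2 * 2)%N mulrnA !mulr2n (fixed_double uF).
pose psi (p : 'Z_2 * 'Z_4) := e *+ p.1 + x *+ p.2.
have psiD p q : psi (p + q) = psi p + psi q.
  by rewrite /psi /= (mulrn_Zp p.1 q.1 e2) (mulrn_Zp p.2 q.2 x4) addrACA.
have psiF q : (psi q \in F) = ~~ odd q.2 := pair_fixed _ _ eF xF.
have delta_psi p : δ (psi p) = δ (x *+ p.2) by rewrite delta_pair.
apply: (brace_iso_of circ3_twist (psi := psi)) => //.
- apply: additive_inj psiD _ => -[i j] psi0.
  have j_even : ~~ odd j by rewrite -(psiF (i, j)) psi0 fixed0.
  have delta_xj : δ (x *+ j) = 0 by rewrite -(delta_psi (i, j)) psi0 delta0.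
  case: i j psi0 j_even delta_xj => [[|[|?]] ?] [[|[|[|[|?]]]] ?] //= psi0 _;
    rewrite ?mulr2n ?delta_xx => delta_xj; first exact/eqP.
  all: try by rewrite delta_xj eqxx in e_neq0.
  by move: psi0; rewrite /psi /= mulr0n addr0 mulr1n => e0; rewrite e0 eqxx in e_neq0.
- by rewrite card_prod !card_ord; exact: card_cover F_cover.
- move=> -[i j]; rewrite /psi; have [-> ->] := twist3_val (i, j).
  rewrite delta_pair //=.
  case: j => [[|[|[|[|?]]]] ?] //=; rewrite ?mulr0n ?mulr1n ?addr0 ?add0r.
  + by rewrite delta0.
  + by rewrite delta_x mulr2n.
  + by rewrite mulr2n delta_xx.
  + by rewrite [x *+ 3]mulrS !mulr2n (deltaD _ uF) delta_x delta_xx addrC.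
Qed.

Lemma classify_flat : (forall f, f \in F -> δ f = 0) ->
  brace_isomorphic B add1 circ1 \/ brace_isomorphic B add2 circ2.
Proof.
move=> delta_F; have x0F := rep_nonfixed x0_coset.
move e_def: (δ x0) => e.
have deltaE y : δ y = if y \in F then 0 else e.
  case: ifP => [/delta_F // | /negbT yF].
  by rewrite delta_nonfixed // e_def (delta_F _ (coset_shift x0_coset yF)) addr0.
have e_neq0 : e != 0.
  apply: contra x0F => /eqP e0; apply/fixedP => a; apply/eqP.
  by rewrite -subr_eq0 -/(δ a) deltaE e0; case: ifP.
have eF : e \in F by rewrite -e_def delta_fixed.
have F_cover : {subset F <= [:: 0; e]}.
  move=> f fF; rewrite !inE.
  by case: (delta_kernel e_neq0 (delta_F e eF) (delta_F f fF)) => ->; rewrite eqxx ?orbT.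
have := F_cover _ (double_fixed x0); rewrite !inE => /orP [] /eqP xx.
- by right; apply: iso_Z2Z2 e_neq0 x0F xx F_cover deltaE.
- by left; apply: iso_Z4 x0F _ _ _; rewrite xx.
Qed.

(* If delta f1 = e != 0 for some f1 in F, then delta x0 lies outside the kernel
   {0, e}: otherwise delta would take only the values 0 and e, whereas it maps
   onto F, which contains f1. *)
Lemma delta_x0_twisted f1 e : f1 \in F -> δ f1 = e -> e != 0 ->
  δ x0 \notin [:: 0; e].
Proof.
move=> f1F delta_f1 e_neq0; have eF : e \in F by rewrite -delta_f1 delta_fixed.
have delta_e : δ e = 0 by rewrite -delta_f1 delta_delta.
have kernel_F f : f \in F -> δ f \in [:: 0; e].
  move=> fF; rewrite !inE.
  by case: (delta_kernel e_neq0 delta_e (delta_delta fF)) => ->; rewrite eqxx ?orbT.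
suff small y : δ x0 \in [:: 0; e] -> δ y \in [:: 0; e].
  apply/negP => v_small; have [a delta_a] := delta_onto x0_coset f1F.
  have := small a v_small; rewrite delta_a !inE => /orP [] /eqP f1_val.
    by rewrite -delta_f1 f1_val delta0 eqxx in e_neq0.
  by rewrite -delta_f1 f1_val delta_e eqxx in e_neq0.
case: (boolP (y \in F)) => [yF _ | yF]; first exact: kernel_F.
have yx0F := coset_shift x0_coset yF; rewrite (delta_nonfixed yF).
move: (kernel_F _ yx0F); rewrite !inE => /orP [] /eqP -> /orP [] /eqP ->;
  by rewrite ?addr0 ?add0r ?(fixed_double eF) eqxx ?orbT.
Qed.

(* If delta f1 = e != 0 for some f1 in F, then with u = 2 x0 we get
   F = {0, e, u, e + u}, delta u = e, and delta x0 is u or e + u; in the latter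
   case x0 + u is a better representative. *)
Lemma classify_twisted f1 : f1 \in F -> δ f1 != 0 -> brace_isomorphic B add3 circ3.
Proof.
move=> f1F; move delta_f1: (δ f1) => e e_neq0.
have x0F := rep_nonfixed x0_coset; have uF := double_fixed x0.
have eF : e \in F by rewrite -delta_f1 delta_fixed.
have delta_e : δ e = 0 by rewrite -delta_f1 delta_delta.
have kernel := delta_kernel e_neq0 delta_e.
have v_out := delta_x0_twisted f1F delta_f1 e_neq0; rewrite !inE negb_or in v_out.
case/andP: v_out => v_neq0 v_neqe; have vF := delta_fixed x0.
have delta_v : δ (δ x0) = e.
  case: (kernel _ (delta_delta vF)) => // /kernel [] v_val.
    by rewrite v_val eqxx in v_neq0.
  by rewrite v_val eqxx in v_neqe.
have delta_u : δ (x0 + x0) = e.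
  have := deltaM x0 x0; rewrite circ_twist (negbTE x0F) (deltaD _ vF) delta_v.
  by move/(congr1 (+%R^~ e)); rewrite -addrA (fixed_double eF) addr0 (fixed_double vF) add0r.
have F_cover : {subset F <= [:: 0; e; x0 + x0; e + (x0 + x0)]}.
  move=> f fF; rewrite !inE.
  case: (kernel _ (delta_delta fF)) => delta_f.
    by case: (kernel _ delta_f) => ->; rewrite eqxx ?orbT.
  have /kernel fu : δ (f + (x0 + x0)) = 0.
    by rewrite (deltaD _ uF) delta_f delta_u fixed_double.
  have -> : f = f + (x0 + x0) + (x0 + x0) by rewrite -addrA (fixed_double uF) addr0.
  by case: fu => ->; rewrite ?add0r eqxx ?orbT.
have [v_val | v_val] : δ x0 = x0 + x0 \/ δ x0 = e + (x0 + x0).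
- have := F_cover _ vF; rewrite !inE (negbTE v_neq0) (negbTE v_neqe) /=.
  by case/orP => /eqP; [left | right].
- exact: iso_Z2Z4 e_neq0 delta_e x0F v_val delta_u F_cover.
have xx : x0 + (x0 + x0) + (x0 + (x0 + x0)) = x0 + x0.
  by rewrite addrACA (fixed_double uF) addr0.
apply: (@iso_Z2Z4 e (x0 + (x0 + x0)) e_neq0 delta_e); rewrite ?xx //.
- by rewrite addrC (fixedDl _ uF).
- by rewrite (deltaD _ uF) v_val delta_u addrAC (fixed_double eF) add0r.
Qed.

Lemma classify : [\/ brace_isomorphic B add1 circ1, brace_isomorphic B add2 circ2
  | brace_isomorphic B add3 circ3].
Proof.
case: (boolP [forall f, (f \in F) ==> (δ f == 0)]) => [/forallP flat | ].
  have delta_F f : f \in F -> δ f = 0 by move=> fF; apply/eqP/(implyP (flat f)).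
  by case: (classify_flat delta_F) => iso; [constructor 1 | constructor 2].
rewrite negb_forall => /existsP [f1]; rewrite negb_imply => /andP [f1F delta_f1].
by constructor 3; exact: classify_twisted f1F delta_f1.
Qed.

End CosetData.
End SkewBrace.

Theorem mainTheorem15 (T : finType) (B : skew_brace T) :
  additively_abelian B ->
  #|Lambda_vertices B| = 1%N ->
  [\/ brace_isomorphic B add1 circ1,
      brace_isomorphic B add2 circ2
    | brace_isomorphic B add3 circ3].
Proof.
move=> addC /(single_vertex_coset addC) [x0 x0_coset].
exact: classify x0_coset.
Qed.
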